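(* Suppose $N$ carries a graded complementation and $X$ is a Macaulay basis of $M$. Then, as $\mathbf{k}$-vector spaces, \[N=M\oplus\Big\{n\in N:\ n_b\in N_b\ominus W_b(X)\text{ for all }b\in B\Big\}.\]
   Context: Standing setup. $\mathbf{k}$ is a field. $(A,+,0)$ is a finitely generated, cancellative commutative monoid with a total order $\le$ which is a well-order, such that $0<a$ for every $a\neq0$ and $a\le a'$ implies $a+c\le a'+c$. $R=\bigoplus_{a\in A}R_a$ is a commutative Noetherian $\mathbf{k}$-algebra graded by $A$. $B$ is a well-ordered totally ordered set with an action $(a,b)\mapsto a\cdot b$ of $A$ with $0\cdot b=b$, $(a+a')\cdot b=a\cdot(a'\cdot b)$, monotone and cancellative in each argument. $N=\bigoplus_{b\in B}N_b$ is a Noetherian $R$-module graded by $B$ ($R_aN_b\subseteq N_{a\cdot b}$), $M\subseteq N$ an $R$-submodule; $n_b$ denotes the degree-$b$ component of $n\in N$. For $m\ne0$, $\deg m=\max\{b:m_b\ne0\}$, $\operatorname{lf}(m)=m_{\deg m}$. A finite set $X=\{m_1,\dots,m_n\}$ of nonzero elements of $M$ is a Macaulay basis of $M$ if the $R$-submodule generated by $\{\operatorname{lf}(p):0\ne p\in M\}$ equals that generated by $\operatorname{lf}(m_1),\dots,\operatorname{lf}(m_n)$. $W_b(X)=\operatorname{span}_{\mathbf{k}}\{r\operatorname{lf}(x): x\in X,\ r\in R\text{ homogeneous},\ r\operatorname{lf}(x)\in N_b\}$. A graded complementation on $N$ assigns to each $b$ and each subspace $W\le N_b$ a subspace $W^c\le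 N_b$ with $W\oplus W^c=N_b$; $U\ominus W:=U\cap W^c$. *)

From HB Require Import structures.
From mathcomp Require Import all_boot all_order all_algebra.
Set Implicit Arguments. Unset Strict Implicit. Unset Printing Implicit Defensive.
Import GRing.Theory.
Local Open Scope ring_scope.

Definition total_order (T : eqType) (le : rel T) : Prop :=
  [/\ reflexive le, antisymmetric le, transitive le & total le].

Definition well_order (T : eqType) (le : rel T) : Prop :=
  total_order le /\ well_founded (fun x y => le x y && (x != y)).

Definition fg_monoid (A : nmodType) : Prop :=
  exists gens : seq A, forall a : A, exists l : seq A,
    (forall x, x \in l -> x \in gens) /\ a = \sum_(x <- l) x.

Definition cancellative_monoid (A : nmodType) : Prop :=
  forall a a' c : A, a + c = a' + c -> a = a'.

Definition ordered_monoid (A : nmodType) (leA : rel A) : Prop :=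
  [/\ well_order leA,
      (forall a : A, a != 0 -> leA 0 a && (0 != a)) &
      (forall a a' c : A, leA a a' -> leA (a + c) (a' + c))].

Definition ordered_action (A : nmodType) (leA : rel A) (B : eqType) (leB : rel B)
    (act : A -> B -> B) : Prop :=
  [/\ well_order leB,
      (forall b, act 0 b = b),
      (forall a a' b, act (a + a') b = act a (act a' b)),
      ((forall a a' b, leA a a' -> leB (act a b) (act a' b)) /\
       (forall a b b', leB b b' -> leB (act a b) (act a b'))) &
      ((forall a a' b, act a b = act a' b -> a = a') /\
       (forall a b b', act a b = act a b' -> b = b'))].

Definition ideal_of (R : comPzRingType) (I : R -> Prop) : Prop :=
  [/\ I 0, (forall x y, I x -> I y -> I (x + y)) & (forall r x, I x -> I (r * x))].

Definition noetherian_ring (R : comPzRingType) : Prop :=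
  forall I : R -> Prop, ideal_of I -> exists s : seq R, forall x,
    I x <-> exists c : nat -> R, x = \sum_(i < size s) c i * s`_i.

Definition submodule (R : pzRingType) (N : lmodType R) (M : N -> Prop) : Prop :=
  [/\ M 0, (forall x y, M x -> M y -> M (x + y)) & (forall (r : R) x, M x -> M (r *: x))].

Definition Rspan (R : pzRingType) (N : lmodType R) (S : N -> Prop) (n : N) : Prop :=
  exists s : seq N, (forall i, (i < size s)%N -> S s`_i) /\
    exists c : nat -> R, n = \sum_(i < size s) c i *: s`_i.

Definition noetherian_module (R : pzRingType) (N : lmodType R) : Prop :=
  forall M : N -> Prop, submodule M -> exists s : seq N, forall x,
    M x <-> Rspan (fun v => exists i, (i < size s)%N /\ v = s`_i) x.

Section KStuff.
Variables (k : fieldType) (R : comAlgType k).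

(* k-subspace of an R-module N (k acts through k -> R, c |-> c%:A) *)
Definition ksubspace (N : lmodType R) (W : N -> Prop) : Prop :=
  [/\ W 0, (forall x y, W x -> W y -> W (x + y)) &
      (forall (c : k) x, W x -> W (c%:A *: x))].

Definition kspan (N : lmodType R) (S : N -> Prop) (n : N) : Prop :=
  exists s : seq N, (forall i, (i < size s)%N -> S s`_i) /\
    exists c : nat -> k, n = \sum_(i < size s) (c i)%:A *: s`_i.

(* R = (+)_{a in A} R_a, compR a = projection onto R_a; R_a R_a' <= R_{a+a'} *)
Definition graded_algebra (A : nmodType) (compR : A -> R -> R) : Prop :=
  [/\ (forall a x y, compR a (x + y) = compR a x + compR a y),
      (forall a (c : k) x, compR a (c *: x) = c *: compR a x),
      (forall a a' x, compR a (compR a' x) = if a == a' then compR a x else 0),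
      (forall x, exists s : seq A, [/\ uniq s, (forall a, a \notin s -> compR a x = 0)
                                     & x = \sum_(a <- s) compR a x]) &
      (forall a a' x y, compR a x = x -> compR a' y = y -> compR (a + a') (x * y) = x * y)].

(* N = (+)_{b in B} N_b (k-linear projections compN b), R_a N_b <= N_{a.b} *)
Definition graded_module (A : nmodType) (compR : A -> R -> R) (B : eqType)
    (act : A -> B -> B) (N : lmodType R) (compN : B -> N -> N) : Prop :=
  [/\ (forall b x y, compN b (x + y) = compN b x + compN b y),
      (forall b (c : k) x, compN b (c%:A *: x) = c%:A *: compN b x),
      (forall b b' x, compN b (compN b' x) = if b == b' then compN b x else 0),
      (forall x, exists s : seq B, [/\ uniq s, (forall b, b \notin s -> compN b x = 0)
                                     & x = \sum_(b <- s) compN b x]) &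
      (forall a b (r : R) x, compR a r = r -> compN b x = x ->
         compN (act a b) (r *: x) = r *: x)].

Definition is_deg (B : eqType) (leB : rel B) (N : lmodType R) (compN : B -> N -> N)
    (m : N) (b : B) : Prop :=
  compN b m != 0 /\ forall b', compN b' m != 0 -> leB b' b.

Definition is_lf (B : eqType) (leB : rel B) (N : lmodType R) (compN : B -> N -> N)
    (m v : N) : Prop :=
  m != 0 /\ exists b, is_deg leB compN m b /\ v = compN b m.

Definition macaulay_basis (B : eqType) (leB : rel B) (N : lmodType R)
    (compN : B -> N -> N) (M : N -> Prop) (X : seq N) : Prop :=
  (forall i, (i < size X)%N -> X`_i != 0 /\ M X`_i) /\
  forall n : N,
    Rspan (fun v => exists p, M p /\ is_lf leB compN p v) n <->
    Rspan (fun v => exists i, (i < size X)%N /\ is_lf leB compN X`_i v) n.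

Definition W_b (A : nmodType) (compR : A -> R -> R) (B : eqType) (leB : rel B)
    (N : lmodType R) (compN : B -> N -> N) (X : seq N) (b : B) : N -> Prop :=
  kspan (fun v => exists (r : R) (x : N),
           [/\ (exists a, compR a r = r),
               (exists i, (i < size X)%N /\ is_lf leB compN X`_i x),
               v = r *: x & compN b v = v]).

(* graded complementation: for each b and each k-subspace W <= N_b,
   a k-subspace W^c <= N_b with W (+) W^c = N_b *)
Definition graded_complementation (B : eqType) (N : lmodType R) (compN : B -> N -> N)
    (cmpl : B -> (N -> Prop) -> (N -> Prop)) : Prop :=
  forall b (W : N -> Prop), ksubspace W -> (forall w, W w -> compN b w = w) ->
    [/\ ksubspace (cmpl b W),
        (forall w, cmpl b W w -> compN b w = w),
        (forall w, W w -> cmpl b W w -> w = 0) &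
        (forall n, compN b n = n -> exists u v, [/\ W u, cmpl b W v & n = u + v])].

Definition ominus (B : eqType) (N : lmodType R) (cmpl : B -> (N -> Prop) -> (N -> Prop))
    (b : B) (U W : N -> Prop) : N -> Prop :=
  fun n => U n /\ cmpl b W n.

Definition complement_part (A : nmodType) (compR : A -> R -> R) (B : eqType) (leB : rel B)
    (N : lmodType R) (compN : B -> N -> N) (X : seq N)
    (cmpl : B -> (N -> Prop) -> (N -> Prop)) (n : N) : Prop :=
  forall b, ominus cmpl b (fun y => compN b y = y) (W_b compR leB compN X b) (compN b n).

End KStuff.

(* - Existence, by well-founded induction on a degree bound b of n: split
     n_b = u + v with u in W_b(X) and v in its complement; every u in W_b(X)
     is the b-component of some m in M all of whose components have degree
     <= b (it suffices to check this on the generators r * lf(x), for which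
     m = r * x works), so n - m - v has all its components strictly below b.
   - Uniqueness: if 0 <> n lies in M and in C, its leading form n_b lies in
     the R-module generated by the leading forms of X, whose b-components all
     lie in W_b(X); so n_b is in W_b(X) and in its complement, i.e. n_b = 0. *)
From HB Require Import structures.
From mathcomp Require Import all_boot all_order all_algebra.
Import GRing.Theory.
Local Open Scope ring_scope.

Section Spans.
Context {k : fieldType} {R : comAlgType k} {N : lmodType R}.

Lemma kspan_ksubspace (S : N -> Prop) : ksubspace (kspan S).
Proof.
split.
- by exists [::]; split=> //; exists (fun=> 0); rewrite big_ord0.
- move=> _ _ [s1 [S1 [c1 ->]]] [s2 [S2 [c2 ->]]].
  exists (s1 ++ s2); split.
    move=> i; rewrite size_cat nth_cat; case: ifP => [lt_i _|/negbT ge_i lt_i].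
      exact: S1.
    by apply: S2; rewrite -(ltn_add2l (size s1)) subnKC // leqNgt.
  exists (fun i => if (i < size s1)%N then c1 i else c2 (i - size s1)%N).
  rewrite size_cat big_split_ord /=; congr (_ + _); apply: eq_bigr => i _.
    by rewrite nth_cat ltn_ord.
  by rewrite nth_cat ltnNge leq_addr /= addKn.
- move=> c _ [s [Ss [c1 ->]]]; exists s; split=> //; exists (fun i => c * c1 i).
  rewrite scaler_sumr; apply: eq_bigr => i _.
  by rewrite scalerA mulr_algl scalerA.
Qed.

Lemma kspan_gen (S : N -> Prop) g : S g -> kspan S g.
Proof.
move=> Sg; exists [:: g]; split; first by case.
by exists (fun=> 1); rewrite big_ord1 /= !scale1r.
Qed.

Lemma kspan_ind (S P : N -> Prop) : ksubspace P -> (forall g, S g -> P g) ->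
  forall u, kspan S u -> P u.
Proof.
move=> [P0 PD PZ] SP _ [s [Ss [c ->]]].
by apply: big_ind => // i _; apply/PZ/SP/Ss.
Qed.

Lemma Rspan_gen (S : N -> Prop) g : S g -> Rspan S g.
Proof.
move=> Sg; exists [:: g]; split; first by case.
by exists (fun=> 1); rewrite big_ord1 /= scale1r.
Qed.

End Spans.

Section GradedModule.
Context {k : fieldType} {A : nmodType} {R : comAlgType k} {compR : A -> R -> R}
  {B : eqType} {leB : rel B} {act : A -> B -> B}
  {N : lmodType R} {compN : B -> N -> N}.
Hypothesis gradedN : graded_module compR act compN.

Lemma compND b x y : compN b (x + y) = compN b x + compN b y.
Proof. by case: gradedN. Qed.

Lemma compN_kscale b (c : k) x : compN b (c%:A *: x) = c%:A *: compN b x.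
Proof. by case: gradedN. Qed.

Lemma compN_idem b x : compN b (compN b x) = compN b x.
Proof. by case: gradedN => _ _ comp_comp _ _; rewrite comp_comp eqxx. Qed.

Lemma compN_ortho b b' x : b != b' -> compN b (compN b' x) = 0.
Proof. by case: gradedN => _ _ comp_comp _ _; rewrite comp_comp => /negbTE ->. Qed.

Lemma compN0 b : compN b 0 = 0.
Proof.
have double := compND b 0 0; rewrite addr0 in double.
by apply: (addrI (compN b 0)); rewrite addr0 -double.
Qed.

Lemma compNN b x : compN b (- x) = - compN b x.
Proof. by apply/eqP; rewrite -subr_eq0 opprK -compND addNr compN0. Qed.

Lemma compNB b x y : compN b (x - y) = compN b x - compN b y.
Proof. by rewrite compND compNN. Qed.

Lemma compN_sum b (I : Type) (s : seq I) (P : pred I) (F : I -> N) :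
  compN b (\sum_(i <- s | P i) F i) = \sum_(i <- s | P i) compN b (F i).
Proof. exact: (big_morph _ (compND b) (compN0 b)). Qed.

Lemma compN_scale_homog a d r y b : compR a r = r -> compN d y = y ->
  compN b (r *: y) = if b == act a d then r *: y else 0.
Proof.
case: gradedN => _ _ comp_comp _ homog_scale rRa yNd.
rewrite -(homog_scale a d r y rRa yNd) comp_comp.
by case: eqP => [->|//]; rewrite homog_scale.
Qed.

Lemma scale_support a r z b : compR a r = r -> compN b (r *: z) != 0 ->
  exists2 b'', compN b'' z != 0 & b = act a b''.
Proof.
case: gradedN => _ _ _ decomp _ rRa.
have [s [_ _ zE]] := decomp z.
rewrite {1}zE scaler_sumr compN_sum => nz_sum.
have [b'' _ nz_b''] : exists2 b'', b'' \in s & compN b (r *: compN b'' z) != 0.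
  apply/hasP; apply: contraNT nz_sum => /hasPn all0.
  by apply/eqP; rewrite big1_seq // => b'' /andP[_ /all0 /negPn/eqP].
move: nz_b''; rewrite (compN_scale_homog a b'' r _ b rRa (compN_idem b'' z)).
have [-> nz|_] := eqVneq b (act a b''); last by rewrite eqxx.
by exists b'' => //; apply: contraNneq nz => ->; rewrite scaler0.
Qed.

Definition bounded_by (n : N) (b : B) : Prop :=
  forall b', compN b' n != 0 -> leB b' b.

Lemma bounded_by0 b : bounded_by 0 b.
Proof. by move=> b'; rewrite compN0 eqxx. Qed.

Lemma bounded_byD x y b : bounded_by x b -> bounded_by y b -> bounded_by (x + y) b.
Proof.
move=> bx by_ b'; rewrite compND.
by have [->|/bx //] := eqVneq (compN b' x) 0; rewrite add0r => /by_.
Qed.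

Lemma bounded_byN x b : bounded_by x b -> bounded_by (- x) b.
Proof. by move=> bx b'; rewrite compNN oppr_eq0 => /bx. Qed.

Lemma bounded_by_kscale (c : k) x b : bounded_by x b -> bounded_by (c%:A *: x) b.
Proof.
move=> bx b'; rewrite compN_kscale.
by have [->|/bx //] := eqVneq (compN b' x) 0; rewrite scaler0 eqxx.
Qed.

Lemma scale_bounded a r z d :
  (forall b b', leB b b' -> leB (act a b) (act a b')) ->
  (forall b b', act a b = act a b' -> b = b') ->
  compR a r = r -> bounded_by z d ->
  compN (act a d) (r *: z) = r *: compN d z /\ bounded_by (r *: z) (act a d).
Proof.
move=> act_mono act_inj rRa zd; split; last first.
  by move=> b' /(scale_support a r z b' rRa) [b'' /zd le_b'' ->]; apply: act_mono.
rewrite -{1}(subrK (compN d z) z) scalerDr compND.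
rewrite [X in _ + X](compN_scale_homog a d r _ _ rRa (compN_idem d z)) eqxx.
suff -> : compN (act a d) (r *: (z - compN d z)) = 0 by rewrite add0r.
apply/eqP; apply: contraT => /(scale_support a r _ _ rRa) [b'' nz /act_inj eb''].
by move: nz; rewrite -eb'' compNB compN_idem subrr eqxx.
Qed.

Hypothesis leB_order : total_order leB.

Lemma bounded_by_homog x b : compN b x = x -> bounded_by x b.
Proof.
case: leB_order => leBB _ _ _ xNb b'.
by have [->|ne] := eqVneq b' b; rewrite ?leBB // -xNb compN_ortho ?eqxx.
Qed.

Lemma seq_max (s : seq B) : s != [::] ->
  exists2 m, m \in s & forall y, y \in s -> leB y m.
Proof.
case: leB_order => leBB _ leB_trans leB_total.
elim: s => [//|x s IH] _; have [->|/IH [m ms m_max]] := eqVneq s [::].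
  by exists x; rewrite ?inE // => y; rewrite inE => /eqP ->.
have [le_xm|le_mx] := orP (leB_total x m).
  exists m => [|y]; first by rewrite inE ms orbT.
  by rewrite inE => /orP[/eqP ->|/m_max].
exists x => [|y]; first by rewrite inE eqxx.
by rewrite inE => /orP[/eqP ->|/m_max le_ym]; [exact: leBB | exact: leB_trans le_mx].
Qed.

Lemma zero_or_deg n : n = 0 \/ exists b, is_deg leB compN n b.
Proof.
case: gradedN => _ _ _ decomp _; have [s [_ out_s nE]] := decomp n.
set t := [seq b <- s | compN b n != 0].
have [t0|/seq_max [b tb b_max]] := eqVneq t [::].
  left; rewrite nE big1_seq // => b /andP[_ sb]; apply/eqP/contraT => nz.
  by have := mem_filter (fun b => compN b n != 0) b s; rewrite -/t t0 nz sb.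
right; exists b; split; first by move: tb; rewrite mem_filter => /andP[].
move=> b' nz; apply: b_max; rewrite mem_filter nz /=.
by apply: contraT => /out_s /eqP; rewrite (negbTE nz).
Qed.

Section MacaulayComplement.
Variables (M : N -> Prop) (X : seq N) (cmpl : B -> (N -> Prop) -> (N -> Prop)).
Hypothesis gradedR : graded_algebra compR.
Hypothesis act_mono : forall a b b', leB b b' -> leB (act a b) (act a b').
Hypothesis act_inj : forall a b b', act a b = act a b' -> b = b'.
Hypothesis subM : submodule M.
Hypothesis complN : graded_complementation compN cmpl.
Hypothesis macX : macaulay_basis leB compN M X.

Notation W := (W_b compR leB compN X).
Notation C := (complement_part compR leB compN X cmpl).

Lemma W_homog b w : W b w -> compN b w = w.
Proof.
move: w; apply: (kspan_ind _ (fun w => compN b w = w)); last by move=> g [r [x [_ _ _ ->]]].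
split=> [|x y xb yb|c x xb]; first exact: compN0.
  by rewrite compND xb yb.
by rewrite compN_kscale xb.
Qed.

Lemma W_complement b : [/\ ksubspace (cmpl b (W b)),
   (forall w, cmpl b (W b) w -> compN b w = w),
   (forall w, W b w -> cmpl b (W b) w -> w = 0) &
   (forall n, compN b n = n -> exists u v, [/\ W b u, cmpl b (W b) v & n = u + v])].
Proof. by apply: complN; [exact: kspan_ksubspace | exact: W_homog]. Qed.

Lemma C_add x y : C x -> C y -> C (x + y).
Proof.
move=> Cx Cy b; split; first exact: compN_idem.
have [[_ cmplD _] _ _ _] := W_complement b.
by rewrite compND; apply: cmplD; [case: (Cx b) | case: (Cy b)].
Qed.

Lemma C_complement b v : cmpl b (W b) v -> C v.
Proof.
move=> vb b'; split; first exact: compN_idem.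
have [_ cmpl_homog _ _] := W_complement b; have [[cmpl0 _ _] _ _ _] := W_complement b'.
have [->|ne] := eqVneq b' b; first by rewrite cmpl_homog.
by rewrite -(cmpl_homog _ vb) compN_ortho //; exact: cmpl0.
Qed.

Definition decomposable (n : N) : Prop := exists m c, [/\ M m, C c & n = m + c].

Lemma decomposable_add x y : decomposable x -> decomposable y -> decomposable (x + y).
Proof.
case: subM => _ MD _ [m1 [c1 [Mm1 Cc1 ->]]] [m2 [c2 [Mm2 Cc2 ->]]].
by exists (m1 + m2), (c1 + c2); split; [exact: MD | exact: C_add | rewrite addrACA].
Qed.

Lemma C0 : C 0.
Proof.
by move=> b; rewrite compN0; split; [exact: compN0 | have [[]] := W_complement b].
Qed.

Lemma decomposable_M m : M m -> decomposable m.
Proof. by exists m, 0; split; [| exact: C0 | rewrite addr0]. Qed.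

Lemma decomposable_C c : C c -> decomposable c.
Proof. by exists 0, c; split; [case: subM | | rewrite add0r]. Qed.

(* Every element of W_b(X) is the b-component of an element of M bounded by b:
   for a generator r * lf(X_i) one takes r * X_i. *)
Lemma W_lift b u : W b u -> exists m, [/\ M m, compN b m = u & bounded_by m b].
Proof.
case: subM => M0 MD MZ; move: u.
apply: (kspan_ind _ (fun u => exists m, [/\ M m, compN b m = u & bounded_by m b])).
  split.
  - by exists 0; split; rewrite ?compN0 //; apply: bounded_by0.
  - move=> _ _ [m1 [Mm1 <- bm1]] [m2 [Mm2 <- bm2]]; exists (m1 + m2).
    by split; [exact: MD | rewrite compND | exact: bounded_byD].
  - move=> c _ [m [Mm <- bm]]; exists (c%:A *: m).
    by split; [exact: MZ | rewrite compN_kscale | exact: bounded_by_kscale].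
move=> _ [r [_ [[a rRa] [i [lt_i [_ [d [[_ Xi_d] ->]]]]] -> gen_b]]].
have [-> | nz] := eqVneq (r *: compN d X`_i) 0.
  by exists 0; split; rewrite ?compN0 //; apply: bounded_by0.
have -> : b = act a d.
  move: gen_b nz; rewrite (compN_scale_homog a d r _ b rRa (compN_idem d _)).
  by case: eqP => // _ <-; rewrite eqxx.
have [_ MXi] := (proj1 macX) i lt_i.
have [top_comp bnd] := scale_bounded _ _ _ _ (act_mono a) (@act_inj a) rRa Xi_d.
by exists (r *: X`_i); split; [exact: MZ | exact: top_comp | exact: bnd].
Qed.

Lemma decomposable_bounded : well_founded (fun x y => leB x y && (x != y)) ->
  forall b n, bounded_by n b -> decomposable n.
Proof.
move=> wfB; case: subM => M0 _ _; elim/(well_founded_ind wfB) => b IH n bn.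
have [_ cmpl_homog _ split_b] := W_complement b.
have [u [v [Wu Cv nb]]] := split_b _ (compN_idem b n).
have [m [Mm mb bm]] := W_lift b u Wu.
have bv : bounded_by v b by apply/bounded_by_homog/cmpl_homog.
have bn' : bounded_by (n - m - v) b.
  by apply/bounded_byD/bounded_byN => //; apply/bounded_byD/bounded_byN.
have n'b : compN b (n - m - v) = 0.
  by rewrite !compNB nb mb (cmpl_homog _ Cv) (addrC u v) addrK subrr.
have -> : n = m + (v + (n - m - v)) by rewrite (addrC v) subrK addrC subrK.
apply: decomposable_add; first exact: decomposable_M.
apply: decomposable_add; first exact/decomposable_C/(C_complement b v Cv).
have [->|[b0 [nz0 top0]]] := zero_or_deg (n - m - v); first exact/decomposable_M/M0.
apply: (IH b0) top0; rewrite (bn' b0 nz0) /=.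
by apply: contraNneq nz0 => ->; rewrite n'b.
Qed.

Lemma decomposable_all : well_founded (fun x y => leB x y && (x != y)) ->
  forall n, decomposable n.
Proof.
move=> wfB n; have [->|[b [_ bn]]] := zero_or_deg n; last exact: decomposable_bounded bn.
by apply: decomposable_M; case: subM.
Qed.

Lemma compN_lf_span_W b y :
  Rspan (fun v => exists i, (i < size X)%N /\ is_lf leB compN X`_i v) y -> W b (compN b y).
Proof.
have [W0 WD _] : ksubspace (W b) := kspan_ksubspace _.
case: gradedR => _ _ compR_comp decompR _.
move=> [s [lf_s [c ->]]]; rewrite compN_sum; apply: big_ind => // j _.
have [i [lt_i lf_i]] := lf_s j (ltn_ord j); have [_ [d [_ sj]]] := lf_i.
have [sa [_ _ ->]] := decompR (c j); rewrite scaler_suml compN_sum.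
apply: big_ind => // a _.
have ca : compR a (compR a (c j)) = compR a (c j) by rewrite compR_comp eqxx.
have sj_d : compN d s`_j = s`_j by rewrite sj compN_idem.
rewrite (compN_scale_homog a d _ _ b ca sj_d).
case: eqP => [eb|_]; last exact: W0.
apply: kspan_gen; exists (compR a (c j)), s`_j; split; [by exists a | by exists i | by [] |].
by rewrite (compN_scale_homog a d _ _ b ca sj_d) eb eqxx.
Qed.

Lemma M_cap_C n : M n -> C n -> n = 0.
Proof.
move=> Mn Cn; have [//|[b [nz top]]] := zero_or_deg n.
have nz_n : n != 0 by apply: contraNneq nz => ->; rewrite compN0.
have lf_span : Rspan (fun v => exists i, (i < size X)%N /\ is_lf leB compN X`_i v) (compN b n).
  by apply/(proj2 macX)/Rspan_gen; exists n; split=> //; split=> //; exists b.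
have [_ _ W_cap _] := W_complement b.
have W_nb : W b (compN b n) by rewrite -compN_idem; exact: compN_lf_span_W.
by move: nz; rewrite (W_cap _ W_nb (proj2 (Cn b))) eqxx.
Qed.

End MacaulayComplement.

End GradedModule.

Theorem mainTheorem5 (k : fieldType) (A : nmodType) (leA : rel A)
  (R : comAlgType k) (compR : A -> R -> R)
  (B : eqType) (leB : rel B) (act : A -> B -> B)
  (N : lmodType R) (compN : B -> N -> N)
  (M : N -> Prop) (X : seq N) (cmpl : B -> (N -> Prop) -> (N -> Prop)) :
  fg_monoid A -> cancellative_monoid A -> ordered_monoid leA ->
  noetherian_ring R -> graded_algebra compR ->
  ordered_action leA leB act ->
  noetherian_module N -> graded_module compR act compN ->
  submodule M ->
  graded_complementation compN cmpl ->
  macaulay_basis leB compN M X ->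
  (* N = M (+) {n : n_b in N_b (-) W_b(X) for all b}, as k-vector spaces *)
  (forall n : N, exists m c,
      [/\ M m, complement_part compR leB compN X cmpl c & n = m + c]) /\
  (forall n : N, M n -> complement_part compR leB compN X cmpl n -> n = 0).
Proof.
move=> _ _ _ _ gradedR [[orderB wfB] _ _ [_ act_mono] [_ act_inj]] _ gradedN
  subM complN macX.
split; first exact: decomposable_all gradedN orderB M X cmpl act_mono act_inj
  subM complN macX wfB.
exact: M_cap_C gradedN orderB M X cmpl gradedR complN macX.
Qed.
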